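(* Let $n\in\mathbb Z_{>0}$, let $W:=V^{\oplus n}$ and $W_*:=V_*^{\oplus n}$ with the pairing $\langle (v_i),(w_i)\rangle=\sum_i\langle v_i,w_i\rangle$, and let $\varphi:\mathfrak{gl}(V,V_* )\to\mathfrak{gl}(W,W_* )$ be the $n$-fold diagonal map $A\mapsto \mathrm{diag}(A,\dots,A)$. Then the normalizer of $\varphi(\mathfrak{sl}(V,V_* ))$ in $\mathfrak{gl}(W,W_* )$ equals $\varphi(\mathfrak{gl}(V,V_* ))$. Moreover, if $V_*$ is identified with $V$ so that the pairing becomes a nondegenerate symmetric (resp. antisymmetric) form on $V$, then $\varphi(\mathfrak{so}(V))$ (resp. $\varphi(\mathfrak{sp}(V))$) is self-normalizing in $\mathfrak{gl}(W,W_* )$.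
   Context: Ground field $\mathbb C$. $V,V_*$ are countable-dimensional with nondegenerate pairing $\langle\cdot,\cdot\rangle$. $\mathfrak{gl}(V,V_* )$ is the Lie algebra of the associative algebra $V\otimes V_*$ with $(v\otimes w)(v'\otimes w')=\langle v',w\rangle v\otimes w'$; $\mathfrak{sl}(V,V_* )=[\mathfrak{gl}(V,V_* ),\mathfrak{gl}(V,V_* )]$ (the kernel of the trace $v\otimes w\mapsto\langle v,w\rangle$). Given a nondegenerate symmetric form on $V$, $\mathfrak{so}(V)$ denotes the subalgebra $\bigwedge^2V\subset\mathfrak{gl}(V,V)$ (spanned by $v\otimes w-w\otimes v$); given a nondegenerate antisymmetric form, $\mathfrak{sp}(V)$ denotes the subalgebra $\mathrm{Sym}^2V\subset\mathfrak{gl}(V,V)$ (spanned by $v\otimes w+w\otimes v$). Elements of $\mathfrak{gl}(W,W_* )$ are viewed as $n\times n$ block matrices with entries in $\mathfrak{gl}(V,V_* )$. *)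

From HB Require Import structures.
From mathcomp Require Import all_boot all_order all_algebra.
Unset Printing Implicit Defensive.
Import GRing.Theory.
Local Open Scope ring_scope.

Section Defs.
Context {K : fieldType}.

Definition bilinear_pairing {U Us : lmodType K} (p : U -> Us -> K) : Prop :=
  (forall a x y w, p (a *: x + y) w = a * p x w + p y w) /\
  (forall a v w z, p v (a *: w + z) = a * p v w + p v z).

Definition nondeg_pairing {U Us : lmodType K} (p : U -> Us -> K) : Prop :=
  (forall v, (forall w, p v w = 0) -> v = 0) /\
  (forall w, (forall v, p v w = 0) -> w = 0).

Definition nat_basis {U : lmodType K} (e : nat -> U) : Prop :=
  (forall k (c : 'I_k -> K), \sum_(i < k) c i *: e i = 0 -> forall i, c i = 0) /\
  (forall v, exists k (c : 'I_k -> K), v = \sum_(i < k) c i *: e i).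

Definition countable_dim (U : lmodType K) : Prop := exists e : nat -> U, nat_basis e.

(* the operator x |-> sum_i <x, ws i> vs i, i.e. the action of
   sum_i vs i (x) ws i in U (x) Us on U *)
Definition tensor_op {U Us : lmodType K} (p : U -> Us -> K) {k : nat}
  (vs : 'I_k -> U) (ws : 'I_k -> Us) : U -> U :=
  fun x => \sum_(i < k) p x (ws i) *: vs i.

(* A in gl(U, Us) = U (x) Us *)
Definition in_gl {U Us : lmodType K} (p : U -> Us -> K) (A : U -> U) : Prop :=
  exists k (vs : 'I_k -> U) (ws : 'I_k -> Us),
    forall x, A x = tensor_op p vs ws x.

(* A in sl(U, Us) = kernel of the trace  v (x) w |-> <v, w> *)
Definition in_sl {U Us : lmodType K} (p : U -> Us -> K) (A : U -> U) : Prop :=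
  exists k (vs : 'I_k -> U) (ws : 'I_k -> Us),
    (forall x, A x = tensor_op p vs ws x) /\ \sum_(i < k) p (vs i) (ws i) = 0.

(* so(U) = /\^2 U, spanned by v (x) w - w (x) v, for a form b on U *)
Definition in_so {U : lmodType K} (b : U -> U -> K) (A : U -> U) : Prop :=
  exists k (vs ws : 'I_k -> U),
    forall x, A x = \sum_(i < k) (b x (ws i) *: vs i - b x (vs i) *: ws i).

(* sp(U) = Sym^2 U, spanned by v (x) w + w (x) v *)
Definition in_sp {U : lmodType K} (b : U -> U -> K) (A : U -> U) : Prop :=
  exists k (vs ws : 'I_k -> U),
    forall x, A x = \sum_(i < k) (b x (ws i) *: vs i + b x (vs i) *: ws i).

Definition lie_br {U : lmodType K} (A B : U -> U) : U -> U :=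
  fun x => A (B x) - B (A x).

Definition diag_op {U : lmodType K} (n : nat) (A : U -> U) :
  {ffun 'I_n -> U} -> {ffun 'I_n -> U} :=
  fun x => [ffun i => A (x i)].

Definition pairingW {U Us : lmodType K} (n : nat) (p : U -> Us -> K)
  (x : {ffun 'I_n -> U}) (y : {ffun 'I_n -> Us}) : K :=
  \sum_(i < n) p (x i) (y i).

Definition in_diag_img {U : lmodType K} (n : nat) (P : (U -> U) -> Prop)
  (X : {ffun 'I_n -> U} -> {ffun 'I_n -> U}) : Prop :=
  exists A, P A /\ forall x, X x = diag_op n A x.

Definition normalizes {U : lmodType K} (n : nat) (P : (U -> U) -> Prop)
  (X : {ffun 'I_n -> U} -> {ffun 'I_n -> U}) : Prop :=
  forall A, P A -> in_diag_img n P (lie_br X (diag_op n A)).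

End Defs.

From HB Require Import structures.
From mathcomp Require Import all_boot all_order all_algebra ring.
Import GRing.Theory Num.Theory.
Local Open Scope ring_scope.

(* An element of gl(V, V_* ) = V (x) V_* acts on V as a finite-rank operator
   x |-> sum_t <x, w_t> v_t ([frep]).  An operator X in gl(W, W_* ), W = V^n,
   is an n x n matrix of blocks X_lm in gl(V, V_* ) ([block]).  If X normalizes
   diag(L), then [X_lm, A] = delta_lm B for every A in L, so the off-diagonal
   blocks and the differences X_ll - X_mm commute with L.  When L has trivial
   centralizer among finite-rank operators, these vanish: X = diag(Y) with Y
   normalizing L; conversely diag(C) normalizes diag(L) when C normalizes L.

   Trivial centralizers are detected with rank-one (resp. rank-two) elements of
   L built from vectors in the annihilator of finitely many linear forms, which
   is nonzero since V is infinite-dimensional ([annihilator_nonzero]).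
   For L = sl(V, V_* ) the normalizer is gl(V, V_* ) because [gl, gl] lies in
   sl ([gl_diag_normalizer]).  so(V) and sp(V) are treated together as the
   finite-rank operators skew-adjoint for a form with b(x, y) = eps b(y, x)
   ([in_skew]); they are self-normalizing since, if [Y, L] lies in L, then Y + Y^*
   commutes with L and hence vanishes ([skew_diag_normalizer]). *)

Section Pairing.
Context {K : fieldType} {V Vs : lmodType K} {p : V -> Vs -> K}.
Hypothesis hp : bilinear_pairing p.

Lemma pairingDl x y w : p (x + y) w = p x w + p y w.
Proof. by have := hp.1 1 x y w; rewrite scale1r mul1r. Qed.

Lemma pairing0l w : p 0 w = 0.
Proof. by apply: (@addrI _ (p 0 w)); rewrite -pairingDl !addr0. Qed.

Lemma pairingZl a x w : p (a *: x) w = a * p x w.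
Proof. by have := hp.1 a x 0 w; rewrite addr0 pairing0l addr0. Qed.

Lemma pairingNl x w : p (- x) w = - p x w.
Proof. by rewrite -scaleN1r pairingZl mulN1r. Qed.

Lemma pairingBl x y w : p (x - y) w = p x w - p y w.
Proof. by rewrite pairingDl pairingNl. Qed.

Lemma pairing_suml (I : Type) (r : seq I) (P : pred I) (F : I -> V) w :
  p (\sum_(i <- r | P i) F i) w = \sum_(i <- r | P i) p (F i) w.
Proof. by apply: (big_morph (p^~ w)) => [x y|]; rewrite ?pairingDl ?pairing0l. Qed.

Lemma pairingDr w x y : p w (x + y) = p w x + p w y.
Proof. by have := hp.2 1 w x y; rewrite scale1r mul1r. Qed.

Lemma pairing0r w : p w 0 = 0.
Proof. by apply: (@addrI _ (p w 0)); rewrite -pairingDr !addr0. Qed.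

Lemma pairingZr a w x : p w (a *: x) = a * p w x.
Proof. by have := hp.2 a w x 0; rewrite addr0 pairing0r addr0. Qed.

Lemma pairingNr w x : p w (- x) = - p w x.
Proof. by rewrite -scaleN1r pairingZr mulN1r. Qed.

Lemma pairingBr w x y : p w (x - y) = p w x - p w y.
Proof. by rewrite pairingDr pairingNr. Qed.

Lemma pairing_sumr (I : Type) (r : seq I) (P : pred I) (F : I -> Vs) w :
  p w (\sum_(i <- r | P i) F i) = \sum_(i <- r | P i) p w (F i).
Proof. by apply: (big_morph (p w)) => [x y|]; rewrite ?pairingDr ?pairing0r. Qed.

End Pairing.

Lemma sum_enum_val (T : finType) (U : nmodType) (F : T -> U) :
  \sum_t F t = \sum_(i < #|T|) F (enum_val i).
Proof.
rewrite (reindex (@enum_rank T)) /=; last first.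
  by exists enum_val => i _; [rewrite enum_rankK | rewrite enum_valK].
by apply: eq_bigr => t _; rewrite enum_rankK.
Qed.

Definition frep {K : fieldType} {V Vs : lmodType K} (p : V -> Vs -> K)
    {T : finType} (vs : T -> V) (ws : T -> Vs) : V -> V :=
  fun x => \sum_t p x (ws t) *: vs t.

Definition frep_trace {K : fieldType} {V Vs : lmodType K} (p : V -> Vs -> K)
    {T : finType} (vs : T -> V) (ws : T -> Vs) : K :=
  \sum_t p (vs t) (ws t).

Section FiniteRank.
Context {K : fieldType} {V Vs : lmodType K} {p : V -> Vs -> K}.
Hypothesis hp : bilinear_pairing p.

Lemma frepB (T : finType) (vs : T -> V) ws x y :
  frep p vs ws (x - y) = frep p vs ws x - frep p vs ws y.
Proof.
by rewrite /frep -sumrB; apply: eq_bigr => t _; rewrite pairingBl // scalerBl.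
Qed.

Lemma frep0 (T : finType) (vs : T -> V) ws : frep p vs ws 0 = 0.
Proof. by rewrite /frep big1 // => t _; rewrite pairing0l // scale0r. Qed.

Lemma frepZl (T : finType) (c : K) (vs : T -> V) ws x :
  frep p (fun t => c *: vs t) ws x = c *: frep p vs ws x.
Proof. by rewrite /frep scaler_sumr; apply: eq_bigr => t _; rewrite !scalerA mulrC. Qed.

Lemma frepZr (T : finType) (c : K) (vs : T -> V) ws x :
  frep p vs (fun t => c *: ws t) x = c *: frep p vs ws x.
Proof. by rewrite /frep scaler_sumr; apply: eq_bigr => t _; rewrite pairingZr // scalerA. Qed.

Lemma in_gl_frep A :
  in_gl p A <->
  exists (T : finType) (vs : T -> V) (ws : T -> Vs), forall x, A x = frep p vs ws x.
Proof.
split=> [[k [vs [ws hA]]]|[T [vs [ws hA]]]]; first by exists (ordinal k : finType), vs, ws.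
exists #|T|, (vs \o enum_val), (ws \o enum_val) => x.
by rewrite hA /frep /tensor_op sum_enum_val.
Qed.

Lemma in_gl_sub {A} : in_gl p A -> forall x y, A (x - y) = A x - A y.
Proof. by move=> /in_gl_frep [T [vs [ws hA]]] x y; rewrite !hA frepB. Qed.

Lemma in_gl_zero {A} : in_gl p A -> A 0 = 0.
Proof. by move=> /in_gl_sub hA; have := hA 0 0; rewrite subr0 subrr. Qed.

Lemma in_sl_frep A :
  in_sl p A <-> exists (T : finType) (vs : T -> V) (ws : T -> Vs),
    (forall x, A x = frep p vs ws x) /\ frep_trace p vs ws = 0.
Proof.
split=> [[k [vs [ws hA]]]|[T [vs [ws [hA htr]]]]].
  by exists (ordinal k : finType), vs, ws.
exists #|T|, (vs \o enum_val), (ws \o enum_val); split; last first.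
  by rewrite /= -(@sum_enum_val _ _ (fun t => p (vs t) (ws t))).
by move=> x; rewrite hA /frep /tensor_op sum_enum_val.
Qed.

Lemma frep_diff (T1 T2 : finType) (vs1 : T1 -> V) ws1 (vs2 : T2 -> V) ws2 x :
  frep p vs1 ws1 x - frep p vs2 ws2 x =
  frep p (fun s : T1 + T2 => match s with inl t => vs1 t | inr t => - vs2 t end)
       (fun s => match s with inl t => ws1 t | inr t => ws2 t end) x.
Proof.
rewrite /frep big_sumType /= -sumrN; congr (_ + _).
by apply: eq_bigr => t _; rewrite scalerN.
Qed.

Lemma frep_trace_diff (T1 T2 : finType) (vs1 : T1 -> V) ws1 (vs2 : T2 -> V) ws2 :
  frep_trace p (fun s : T1 + T2 => match s with inl t => vs1 t | inr t => - vs2 t end)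
             (fun s => match s with inl t => ws1 t | inr t => ws2 t end) =
  frep_trace p vs1 ws1 - frep_trace p vs2 ws2.
Proof.
rewrite /frep_trace big_sumType /= -sumrN; congr (_ + _).
by apply: eq_bigr => t _; rewrite pairingNl.
Qed.

Section Composition.
Variables (T1 T2 : finType) (vs1 : T1 -> V) (ws1 : T1 -> Vs).
Variables (vs2 : T2 -> V) (ws2 : T2 -> Vs).

Lemma frep_comp x :
  frep p vs1 ws1 (frep p vs2 ws2 x) =
  frep p (fun q : T1 * T2 => p (vs2 q.2) (ws1 q.1) *: vs1 q.1) (fun q => ws2 q.2) x.
Proof.
rewrite /frep -(pair_bigA _ (fun t1 t2 => p x (ws2 t2) *: (p (vs2 t2) (ws1 t1) *: vs1 t1))).
apply: eq_bigr => t1 _; rewrite pairing_suml // scaler_suml.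
by apply: eq_bigr => t2 _; rewrite pairingZl // scalerA.
Qed.

Lemma frep_trace_comp :
  frep_trace p (fun q : T1 * T2 => p (vs2 q.2) (ws1 q.1) *: vs1 q.1) (fun q => ws2 q.2) =
  frep_trace p (fun q : T2 * T1 => p (vs1 q.2) (ws2 q.1) *: vs2 q.1) (fun q => ws1 q.2).
Proof.
rewrite /frep_trace -(pair_bigA _ (fun t1 t2 => p (p (vs2 t2) (ws1 t1) *: vs1 t1) (ws2 t2))).
rewrite -(pair_bigA _ (fun t2 t1 => p (p (vs1 t1) (ws2 t2) *: vs2 t2) (ws1 t1))).
rewrite exchange_big; apply: eq_bigr => t2 _; apply: eq_bigr => t1 _.
by rewrite !pairingZl // mulrC.
Qed.

End Composition.

Lemma lie_frep {T1 T2 : finType} (vs1 : T1 -> V) (ws1 : T1 -> Vs)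
    (vs2 : T2 -> V) (ws2 : T2 -> Vs) :
  exists (T : finType) (vs : T -> V) (ws : T -> Vs),
  (forall x, lie_br (frep p vs1 ws1) (frep p vs2 ws2) x = frep p vs ws x) /\
  frep_trace p vs ws = 0.
Proof.
exists ((T1 * T2) + (T2 * T1))%type.
exists (fun s => match s with
  | inl q => p (vs2 q.2) (ws1 q.1) *: vs1 q.1
  | inr q => - (p (vs1 q.2) (ws2 q.1) *: vs2 q.1) end).
exists (fun s => match s with inl q => ws2 q.2 | inr q => ws1 q.2 end); split.
  by move=> x; rewrite /lie_br !frep_comp frep_diff.
by rewrite frep_trace_diff frep_trace_comp subrr.
Qed.

End FiniteRank.

(* Y vanishes on the annihilator of the finite family zs, as every operator
   of finite rank x |-> sum_t <x, w_t> v_t does (for zs = the w_t). *)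
Definition kills_annihilator {K : fieldType} {V Vs : lmodType K} (p : V -> Vs -> K)
    (zs : seq Vs) (Y : V -> V) : Prop :=
  forall a, (forall z, z \in zs -> p a z = 0) -> Y a = 0.

Definition trivial_centralizer {K : fieldType} {V Vs : lmodType K} (p : V -> Vs -> K)
    (P : (V -> V) -> Prop) : Prop :=
  forall Y zs, kills_annihilator p zs Y ->
  (forall A, P A -> forall x, Y (A x) = A (Y x)) -> forall x, Y x = 0.

Section Centralizer.
Context {K : fieldType} {V Vs : lmodType K} {p : V -> Vs -> K}.
Hypothesis hp : bilinear_pairing p.

Lemma frep_kills (T : finType) (vs : T -> V) (ws : T -> Vs) :
  kills_annihilator p [seq ws t | t <- enum T] (frep p vs ws).
Proof.
move=> a ha; rewrite /frep big1 // => t _.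
by rewrite ha ?scale0r // map_f ?mem_enum.
Qed.

(* In an infinite-dimensional space, the annihilator of a finite family of
   linear forms z_1..z_m is nonzero: the (m+1) x m matrix <e_i, z_j> has a
   nonzero left kernel, which gives a nontrivial combination of the e_i. *)
Lemma annihilator_nonzero {e : nat -> V} : nat_basis e -> forall zs : seq Vs,
  exists a, a != 0 /\ forall z, z \in zs -> p a z = 0.
Proof.
move=> [e_free _] zs; set m := size zs.
pose M : 'M[K]_(m.+1, m) := \matrix_(i, j) p (e i) (nth 0 zs j).
have kerM_neq0 : kermx M != 0.
  by rewrite -mxrank_eq0 mxrank_ker -lt0n subn_gt0 ltnS rank_leq_col.
have [i hi|] := pickP (fun i => row i (kermx M) != 0); last first.
  move=> row0_ker; case/negP: kerM_neq0; apply/eqP/row_matrixP => i.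
  by rewrite row0; apply/eqP; move/negbT: (row0_ker i); rewrite negbK.
set u := row i (kermx M).
have uM : u *m M = 0 by rewrite /u -row_mul mulmx_ker row0.
exists (\sum_(j < m.+1) u 0 j *: e j); split.
  apply: contra hi => /eqP h; apply/eqP/matrixP => a j.
  by rewrite (ord1 a) [RHS]mxE; exact: (e_free _ (fun j => u 0 j) h j).
move=> z zin; have := index_mem z zs; rewrite zin => hz.
rewrite -(nth_index 0 zin) pairing_suml //.
transitivity ((u *m M) 0 (Ordinal hz)); last by rewrite uM mxE.
by rewrite mxE; apply: eq_bigr => j _; rewrite pairingZl // /M !mxE.
Qed.

Hypothesis hnd : nondeg_pairing p.
Hypothesis hV : countable_dim V.

(* sl(V, V_* ) has trivial centralizer: test Y x against the rank-one
   traceless operators x |-> <x, w> a with a in the annihilator of w and zs. *)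
Lemma sl_trivial_centralizer : trivial_centralizer p (in_sl p).
Proof.
move=> Y zs hY hC x; apply: hnd.1 => w.
have [e he] := hV; have [a [a_neq0 ha]] := annihilator_nonzero he (w :: zs).
have hA : in_sl p (fun y => p y w *: a).
  exists 1%N, (fun _ => a), (fun _ => w); split; last by rewrite big_ord1 ha ?mem_head.
  by move=> y; rewrite /tensor_op big_ord1.
move/esym/eqP: (hC _ hA x); rewrite [Y (_ *: _)]hY; last first.
  by move=> z hz; rewrite /= pairingZl // ha ?mulr0 // inE hz orbT.
by rewrite scaler_eq0 (negbTE a_neq0) orbF => /eqP.
Qed.

End Centralizer.

Definition normalizes_op {K : fieldType} {V : lmodType K} (P : (V -> V) -> Prop)
    (Y : V -> V) : Prop :=
  forall A, P A -> exists B, P B /\ forall v, lie_br Y A v = B v.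

(* The Lie algebra spanned by the operators x |-> b(x, w) v - eps b(x, v) w,
   i.e. the finite-rank operators skew-adjoint for the eps-symmetric form b:
   for eps = 1 this is so(V), for eps = -1 it is sp(V). *)
Definition in_skew {K : fieldType} {V : lmodType K} (b : V -> V -> K) (eps : K)
    (A : V -> V) : Prop :=
  exists k (vs ws : 'I_k -> V),
    forall x, A x = \sum_(i < k) (b x (ws i) *: vs i - (eps * b x (vs i)) *: ws i).

Definition skew_adjoint {K : fieldType} {V : lmodType K} (b : V -> V -> K)
    (A : V -> V) : Prop :=
  forall x y, b (A x) y = - b x (A y).

Section Skew.
Context {K : fieldType} {V : lmodType K} {b : V -> V -> K}.
Hypothesis hb : bilinear_pairing b.
Hypothesis hnd : nondeg_pairing b.
Variable eps : K.
Hypothesis hsym : forall x y, b x y = eps * b y x.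

Lemma frep_adjoint (T : finType) (vs ws : T -> V) x y :
  b (frep b vs (fun t => eps *: ws t) x) y = b x (frep b ws vs y).
Proof.
rewrite pairing_suml // pairing_sumr //; apply: eq_bigr => t _.
by rewrite pairingZl // !pairingZr // (hsym y) mulrAC.
Qed.

Lemma frep_adjoint_r (T : finType) (vs ws : T -> V) x y :
  b x (frep b vs (fun t => eps *: ws t) y) = b (frep b ws vs x) y.
Proof. by rewrite hsym frep_adjoint -hsym. Qed.

Lemma in_skew_frep A : in_skew b eps A <-> exists (T : finType) (vs ws : T -> V),
  forall x, A x = frep b vs ws x - frep b ws (fun t => eps *: vs t) x.
Proof.
have sumE (T : finType) (vs ws : T -> V) x :
    frep b vs ws x - frep b ws (fun t => eps *: vs t) x =
    \sum_t (b x (ws t) *: vs t - (eps * b x (vs t)) *: ws t).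
  by rewrite /frep -sumrB; apply: eq_bigr => t _; rewrite pairingZr.
split=> [[k [vs [ws hA]]]|[T [vs [ws hA]]]].
  by exists (ordinal k : finType), vs, ws => x; rewrite hA sumE.
exists #|T|, (vs \o enum_val), (ws \o enum_val) => x.
by rewrite hA sumE (@sum_enum_val _ _ (fun t => _ - _)).
Qed.

Lemma skew_frep {A} : in_skew b eps A ->
  exists (T : finType) (vs ws : T -> V), forall x, A x = frep b vs ws x.
Proof.
move=> /in_skew_frep [T [vs [ws hA]]]; do 3 eexists.
by move=> x; rewrite hA frep_diff.
Qed.

Lemma skew_adjoint_of_skew {A} : in_skew b eps A -> skew_adjoint b A.
Proof.
move=> /in_skew_frep [T [vs [ws hA]]] x y; rewrite !hA pairingBl // pairingBr //.
by rewrite frep_adjoint frep_adjoint_r opprB.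
Qed.

Hypothesis h2 : (2%:R : K) != 0.

(* Conversely a skew-adjoint finite-rank operator Y equals (Y - Y^* )/2. *)
Lemma skew_of_skew_adjoint {T : finType} {Y : V -> V} {vs ws : T -> V} :
  (forall x, Y x = frep b vs ws x) -> skew_adjoint b Y -> in_skew b eps Y.
Proof.
move=> hY hadj; pose c : K := 2%:R^-1.
apply/in_skew_frep; exists T, vs, (fun t => c *: ws t) => x.
have adjE : frep b ws (fun t => eps *: vs t) x = - Y x.
  apply/eqP; rewrite -addr_eq0; apply/eqP; apply: hnd.1 => y.
  by rewrite pairingDl // frep_adjoint -!hY hadj addrN.
have E1 : frep b vs (fun t => c *: ws t) x = c *: Y x by rewrite frepZr // hY.
have E2 : frep b (fun t => c *: ws t) (fun t => eps *: vs t) x = c *: - Y x.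
  by rewrite -adjE; exact: frepZl.
rewrite E1 E2 -scalerBr opprK -mulr2n -scaler_nat scalerA.
by rewrite mulVf // scale1r.
Qed.

Lemma skew_adjoint_lie C A :
  skew_adjoint b C -> skew_adjoint b A -> skew_adjoint b (lie_br C A).
Proof.
move=> hC hA x y; rewrite /lie_br pairingBl // pairingBr //.
by rewrite (hC (A x)) (hA x) (hA (C x)) (hC x) !opprK opprB.
Qed.

Lemma skew_lie C A : in_skew b eps C -> in_skew b eps A -> in_skew b eps (lie_br C A).
Proof.
move=> hC hA.
have [T1 [vs1 [ws1 hC1]]] := skew_frep hC.
have [T2 [vs2 [ws2 hA2]]] := skew_frep hA.
have [T [vs [ws [hCA _]]]] := lie_frep hb vs1 ws1 vs2 ws2.
apply: (skew_of_skew_adjoint (vs := vs) (ws := ws)).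
  by move=> x; rewrite -hCA /lie_br !hC1 !hA2.
by apply: skew_adjoint_lie; exact: skew_adjoint_of_skew.
Qed.

(* Trivial centralizer: test Y x against the rank-two operators
   y |-> b(y, c) a - eps b(y, a) c, with a orthogonal to x, Y x and zs. *)
Lemma skew_trivial_centralizer : countable_dim V -> trivial_centralizer b (in_skew b eps).
Proof.
move=> [e he] Y zs hY hC x; apply: hnd.1 => c.
have [a [a_neq0 ha]] := annihilator_nonzero hb he (x :: Y x :: zs).
have a_perp_x : b x a = 0 by rewrite hsym ha ?mulr0 ?mem_head.
have a_perp_Yx : b (Y x) a = 0 by rewrite hsym ha ?mulr0 // !inE eqxx orbT.
pose A y := b y c *: a - (eps * b y a) *: c.
have hA : in_skew b eps A by exists 1%N, (fun _ => a), (fun _ => c) => y; rewrite big_ord1.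
move/esym/eqP: (hC _ hA x); rewrite /A a_perp_x a_perp_Yx !mulr0 !scale0r !subr0.
rewrite [Y (_ *: _)]hY; last by move=> z hz; rewrite pairingZl // ha ?mulr0 // !inE hz !orbT.
by rewrite scaler_eq0 (negbTE a_neq0) orbF => /eqP.
Qed.

Lemma adjoint_sum_commutes (Y Ys A : V -> V) :
  (forall x y, b (Ys x) y = b x (Y y)) ->
  skew_adjoint b A -> skew_adjoint b (lie_br Y A) ->
  forall x, Y (A x) + Ys (A x) = A (Y x + Ys x).
Proof.
move=> hYs hA hB x; apply/eqP; rewrite -subr_eq0; apply/eqP; apply: hnd.1 => y.
rewrite pairingBl // pairingDl // hYs (hA x) (hA (Y x + Ys x)) pairingDl // hYs.
have := hB x y; rewrite /lie_br pairingBl // pairingBr // (hA (Y x)).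
by move/eqP; rewrite subr_eq => /eqP ->; ring.
Qed.

(* A finite-rank operator normalizing the skew-adjoint operators is one itself:
   Y + Y^* commutes with them and vanishes on a finite-codimensional subspace. *)
Lemma skew_normalizer {T : finType} {Y : V -> V} {vs ws : T -> V} :
  countable_dim V -> (forall x, Y x = frep b vs ws x) ->
  normalizes_op (in_skew b eps) Y -> in_skew b eps Y.
Proof.
move=> hV hY hN; pose Ys := frep b ws (fun t => eps *: vs t).
have hYs x y : b (Ys x) y = b x (Y y) by rewrite frep_adjoint // hY.
pose zs := [seq ws t | t <- enum T] ++ [seq eps *: vs t | t <- enum T].
have Z0 : forall x, Y x + Ys x = 0.
  apply: (skew_trivial_centralizer hV _ zs).
    move=> a ha; rewrite hY /Ys !frep_kills ?addr0 // => z hz; apply: ha.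
      by rewrite mem_cat hz orbT.
    by rewrite mem_cat hz.
  move=> A hA x; have [B [hB hBY]] := hN A hA.
  apply: adjoint_sum_commutes => //; first exact: skew_adjoint_of_skew.
  by move=> u v; rewrite !hBY; apply: skew_adjoint_of_skew.
apply: (skew_of_skew_adjoint hY) => x y.
have -> : Y x = - Ys x by apply/eqP; rewrite -addr_eq0 Z0.
by rewrite pairingNl // hYs.
Qed.

End Skew.

Definition inject {K : fieldType} {V : lmodType K} {n : nat} (m : 'I_n) (v : V) :
  {ffun 'I_n -> V} := [ffun j => if j == m then v else 0].

Definition block {K : fieldType} {V Vs : lmodType K} (p : V -> Vs -> K) {n k : nat}
    (vs : 'I_k -> {ffun 'I_n -> V}) (ws : 'I_k -> {ffun 'I_n -> Vs}) (l m : 'I_n) :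
  V -> V := frep p (fun i => vs i l) (fun i => ws i m).

Section Blocks.
Context {K : fieldType} {V Vs : lmodType K} {p : V -> Vs -> K}.
Hypothesis hp : bilinear_pairing p.
Variables (n k : nat) (vs : 'I_k -> {ffun 'I_n -> V}) (ws : 'I_k -> {ffun 'I_n -> Vs}).

Lemma block_expand x l :
  tensor_op (pairingW n p) vs ws x l = \sum_m block p vs ws l m (x m).
Proof.
rewrite /tensor_op sum_ffunE /block /frep exchange_big; apply: eq_bigr => i _.
by rewrite ffunE /pairingW scaler_suml.
Qed.

Lemma block_inject l m v :
  tensor_op (pairingW n p) vs ws (inject m v) l = block p vs ws l m v.
Proof.
rewrite block_expand (bigD1 m) //= big1 ?ffunE ?eqxx ?addr0 // => j hj.
by rewrite ffunE (negbTE hj) /block frep0.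
Qed.

End Blocks.

Lemma ffunB {K : fieldType} {V : lmodType K} (T : finType) (f g : {ffun T -> V}) x :
  (f - g) x = f x - g x.
Proof. by rewrite !ffunE. Qed.

Lemma diag_inject {K : fieldType} {V : lmodType K} {n : nat} {A : V -> V} :
  A 0 = 0 -> forall (m : 'I_n) v, diag_op n A (inject m v) = inject m (A v).
Proof. by move=> A0 m v; apply/ffunP => j; rewrite !ffunE; case: eqP. Qed.

Section DiagonalNormalizer.
Context {K : fieldType} {V Vs : lmodType K} {p : V -> Vs -> K}.
Hypothesis hp : bilinear_pairing p.
Variable P : (V -> V) -> Prop.
Hypothesis hPgl : forall A, P A -> in_gl p A.
Hypothesis hPcent : trivial_centralizer p P.
Variables (n k : nat) (vs : 'I_k -> {ffun 'I_n -> V}) (ws : 'I_k -> {ffun 'I_n -> Vs}).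
Variable X : {ffun 'I_n -> V} -> {ffun 'I_n -> V}.
Hypothesis hX : forall x, X x = tensor_op (pairingW n p) vs ws x.
Hypothesis hN : normalizes n P X.

Lemma block_bracket {A} : P A -> exists B, P B /\ forall l m v,
  block p vs ws l m (A v) - A (block p vs ws l m v) = if l == m then B v else 0.
Proof.
move=> hA; have [B [hB hXB]] := hN A hA; exists B; split => // l m v.
have A0 : A 0 = 0 := in_gl_zero hp (hPgl _ hA).
have B0 : B 0 = 0 := in_gl_zero hp (hPgl _ hB).
have := congr1 (fun f : {ffun 'I_n -> V} => f l) (hXB (inject m v)).
rewrite /lie_br ffunB !hX (diag_inject A0) (diag_inject B0) /diag_op !ffunE.
by rewrite !block_inject // => ->.
Qed.

Lemma block_kills l m :
  kills_annihilator p [seq ws i m | i <- enum 'I_k] (block p vs ws l m).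
Proof. exact: frep_kills. Qed.

(* Off-diagonal blocks commute with P, hence vanish. *)
Lemma block_offdiag l m : l != m -> forall v, block p vs ws l m v = 0.
Proof.
move=> lm; apply: (hPcent _ _ (block_kills l m)) => A hA x.
have [B [_ hB]] := block_bracket hA.
by apply/eqP; rewrite -subr_eq0 hB (negbTE lm).
Qed.

(* Differences of diagonal blocks commute with P, hence vanish. *)
Lemma block_diag_const l m v : block p vs ws l l v = block p vs ws m m v.
Proof.
apply/subr0_eq; move: v.
apply: (hPcent _ ([seq ws i l | i <- enum 'I_k] ++ [seq ws i m | i <- enum 'I_k])).
  move=> a ha; rewrite !block_kills ?subr0 // => z hz; apply: ha.
    by rewrite mem_cat hz orbT.
  by rewrite mem_cat hz.
move=> A hA x; have [B [_ hB]] := block_bracket hA.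
rewrite (in_gl_sub hp (hPgl _ hA)).
move/eqP: (hB l l x); rewrite eqxx subr_eq => /eqP ->.
move/eqP: (hB m m x); rewrite eqxx subr_eq => /eqP ->.
by rewrite [B x + _]addrC addrKA.
Qed.

Variable o : 'I_n.

Lemma diag_of_normalizer x : X x = diag_op n (block p vs ws o o) x.
Proof.
apply/ffunP => l; rewrite hX block_expand ffunE (bigD1 l) //= big1 ?addr0.
  exact: block_diag_const.
by move=> m ml; apply: block_offdiag; rewrite eq_sym.
Qed.

Lemma block_normalizes : normalizes_op P (block p vs ws o o).
Proof.
move=> A hA; have [B [hB hBx]] := block_bracket hA; exists B; split => // v.
by have := hBx o o v; rewrite eqxx.
Qed.

End DiagonalNormalizer.
Arguments diag_of_normalizer {K V Vs p} hp {P} hPgl hPcent {n k vs ws X} hX hN o x.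
Arguments block_normalizes {K V Vs p} hp {P} hPgl {n k vs ws X} hX hN o.

Section DiagonalOperators.
Context {K : fieldType} {V Vs : lmodType K} {p : V -> Vs -> K}.
Hypothesis hp : bilinear_pairing p.
Variable n : nat.

Lemma pairingW_inject x (m : 'I_n) w : pairingW n p x (inject m w) = p (x m) w.
Proof.
rewrite /pairingW (bigD1 m) //= ffunE eqxx big1 ?addr0 // => j hj.
by rewrite ffunE (negbTE hj) pairing0r.
Qed.

Lemma diag_frep (T : finType) (vs : T -> V) (ws : T -> Vs) x :
  diag_op n (frep p vs ws) x =
  frep (pairingW n p) (fun q : 'I_n * T => inject q.1 (vs q.2))
                      (fun q => inject q.1 (ws q.2)) x.
Proof.
apply/ffunP => l; rewrite ffunE /frep sum_ffunE.
rewrite -(pair_bigA _ (fun j t => (pairingW n p x (inject j (ws t)) *: inject j (vs t)) l)).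
rewrite (bigD1 l) //= [X in _ + X]big1 ?addr0 => [|j jl]; last first.
  by apply: big1 => t _; rewrite !ffunE eq_sym (negbTE jl) scaler0.
by apply: eq_bigr => t _; rewrite pairingW_inject !ffunE eqxx.
Qed.

Lemma in_gl_diag {C} : in_gl p C -> in_gl (pairingW n p) (diag_op n C).
Proof.
move=> /in_gl_frep [T [vs [ws hC]]]; apply/in_gl_frep.
exists ('I_n * T)%type, (fun q => inject q.1 (vs q.2)), (fun q => inject q.1 (ws q.2)).
by move=> x; rewrite -diag_frep; apply/ffunP => l; rewrite !ffunE hC.
Qed.

End DiagonalOperators.

Lemma diag_lie {K : fieldType} {V : lmodType K} n (C A : V -> V) x :
  lie_br (diag_op n C) (diag_op n A) x = diag_op n (lie_br C A) x.
Proof. by apply/ffunP => l; rewrite ffunB !ffunE. Qed.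

Theorem diag_normalizer {K : fieldType} {V Vs : lmodType K} (p : V -> Vs -> K)
    (hp : bilinear_pairing p) (n : nat) (hn : (0 < n)%N) (P N : (V -> V) -> Prop) :
  (forall A, P A -> in_gl p A) -> trivial_centralizer p P ->
  (forall C, N C -> in_gl p C) ->
  (forall (T : finType) (vs : T -> V) (ws : T -> Vs) (Y : V -> V),
     (forall x, Y x = frep p vs ws x) -> normalizes_op P Y -> N Y) ->
  (forall C A, N C -> P A -> P (lie_br C A)) ->
  forall X, (in_gl (pairingW n p) X /\ normalizes n P X) <-> in_diag_img n N X.
Proof.
move=> hPgl hPcent hNgl hNnorm hNP X; split.
  move=> [[k [vs [ws hX]]] hN]; pose o := Ordinal hn.
  exists (block p vs ws o o); split.
    apply: (hNnorm _ (fun i => vs i o) (fun i => ws i o)) => //.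
    exact: (block_normalizes hp hPgl hX hN).
  exact: (diag_of_normalizer hp hPgl hPcent hX hN).
move=> [C [hC hX]]; split.
  have [k [vs [ws hD]]] := in_gl_diag hp n (hNgl _ hC).
  by exists k, vs, ws => x; rewrite hX hD.
move=> A hA; exists (lie_br C A); split; first exact: hNP.
by move=> x; rewrite -diag_lie /lie_br !hX.
Qed.

Section GeneralLinear.
Context {K : fieldType} {V Vs : lmodType K} {p : V -> Vs -> K}.
Hypothesis hp : bilinear_pairing p.

Lemma in_sl_gl {A} : in_sl p A -> in_gl p A.
Proof. by move=> [k [vs [ws [hA _]]]]; exists k, vs, ws. Qed.

Lemma lie_in_sl C A : in_gl p C -> in_gl p A -> in_sl p (lie_br C A).
Proof.
move=> /in_gl_frep [T1 [vs1 [ws1 hC]]] /in_gl_frep [T2 [vs2 [ws2 hA]]].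
have [T [vs [ws [hCA htr]]]] := lie_frep hp vs1 ws1 vs2 ws2.
apply/in_sl_frep; exists T, vs, ws; split => // x.
by rewrite -hCA /lie_br !hC !hA.
Qed.

Hypothesis hnd : nondeg_pairing p.
Hypothesis hV : countable_dim V.

Theorem gl_diag_normalizer n (hn : (0 < n)%N) X :
  (in_gl (pairingW n p) X /\ normalizes n (in_sl p) X) <-> in_diag_img n (in_gl p) X.
Proof.
apply: diag_normalizer => //.
- by move=> A; apply: in_sl_gl.
- exact: sl_trivial_centralizer.
- by move=> T vs ws Y hY _; apply/in_gl_frep; exists T, vs, ws.
- by move=> C A hC /in_sl_gl hA; apply: lie_in_sl.
Qed.

End GeneralLinear.

Section Orthosymplectic.
Context {K : fieldType} {V : lmodType K} {b : V -> V -> K}.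
Hypothesis hb : bilinear_pairing b.
Hypothesis hnd : nondeg_pairing b.
Variable eps : K.
Hypothesis hsym : forall x y, b x y = eps * b y x.
Hypothesis h2 : (2%:R : K) != 0.
Hypothesis hV : countable_dim V.

Theorem skew_diag_normalizer (Q : (V -> V) -> Prop) :
  (forall A, Q A <-> in_skew b eps A) -> forall n, (0 < n)%N ->
  forall X, (in_gl (pairingW n b) X /\ normalizes n Q X) <-> in_diag_img n Q X.
Proof.
move=> hQ n hn; have Q_gl A : Q A -> in_gl b A.
  by move=> /hQ /(skew_frep hb) [T [vs [ws hA]]]; apply/in_gl_frep; exists T, vs, ws.
apply: diag_normalizer => //.
- move=> Y zs hY hC; apply: (skew_trivial_centralizer hb hnd eps hsym hV _ _ hY).
  by move=> A /hQ; apply: hC.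
- move=> T vs ws Y hY hN; apply/hQ; apply: (skew_normalizer hb hnd eps hsym h2 hV hY).
  move=> A /hQ /hN [B [/hQ hB hBY]]; by exists B.
- by move=> C A /hQ hC /hQ hA; apply/hQ; apply: skew_lie.
Qed.

End Orthosymplectic.

Lemma in_so_skew {K : fieldType} {V : lmodType K} (b : V -> V -> K) A :
  in_so b A <-> in_skew b 1 A.
Proof.
by split=> -[k [vs [ws hA]]]; exists k, vs, ws => x; rewrite hA;
  apply: eq_bigr => i _; rewrite mul1r.
Qed.

Lemma in_sp_skew {K : fieldType} {V : lmodType K} (b : V -> V -> K) A :
  in_sp b A <-> in_skew b (-1) A.
Proof.
by split=> -[k [vs [ws hA]]]; exists k, vs, ws => x; rewrite hA;
  apply: eq_bigr => i _; rewrite mulN1r scaleNr opprK.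
Qed.

Theorem lemma2p8 (K : numClosedFieldType) (n : nat) (hn : (0 < n)%N) :
  (forall (V Vs : lmodType K) (p : V -> Vs -> K),
     bilinear_pairing p -> nondeg_pairing p ->
     countable_dim V -> countable_dim Vs ->
     forall X : {ffun 'I_n -> V} -> {ffun 'I_n -> V},
       (in_gl (pairingW n p) X /\ normalizes n (in_sl p) X) <->
       in_diag_img n (in_gl p) X)
  /\
  (forall (V : lmodType K) (b : V -> V -> K),
     bilinear_pairing b -> nondeg_pairing b ->
     (forall x y, b x y = b y x) -> countable_dim V ->
     forall X : {ffun 'I_n -> V} -> {ffun 'I_n -> V},
       (in_gl (pairingW n b) X /\ normalizes n (in_so b) X) <->
       in_diag_img n (in_so b) X)
  /\
  (forall (V : lmodType K) (b : V -> V -> K),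
     bilinear_pairing b -> nondeg_pairing b ->
     (forall x y, b x y = - b y x) -> countable_dim V ->
     forall X : {ffun 'I_n -> V} -> {ffun 'I_n -> V},
       (in_gl (pairingW n b) X /\ normalizes n (in_sp b) X) <->
       in_diag_img n (in_sp b) X).
Proof.
have h2 : (2%:R : K) != 0 by rewrite pnatr_eq0.
split; first by move=> V Vs p hp hnd hV _; exact: gl_diag_normalizer.
split=> V b hb hnd hsym hV.
  have hsym1 x y : b x y = 1 * b y x by rewrite mul1r.
  exact: (skew_diag_normalizer hb hnd 1 hsym1 h2 hV _ (in_so_skew b)).
have hsymN1 x y : b x y = -1 * b y x by rewrite mulN1r.
exact: (skew_diag_normalizer hb hnd (-1) hsymN1 h2 hV _ (in_sp_skew b)).
Qed.
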